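(* Assume $|V|\ge2$ and that there is $\kappa_0>0$ with $\overline\kappa(x,y)\ge\kappa_0$ for all $x,y\in V$, $x\ne y$. Then $\mathrm{diam}(H)\le 2/\kappa_0$.
   Context: Let $H=(V,E,w)$ be a weighted hypergraph: $V$ is a finite set, $E$ a set of nonempty subsets of $V$, $w\colon E\to\mathbb{R}_{>0}$. Write $x\sim y$ if some $e\in E$ contains both; $H$ is assumed connected. The degree is $d_x=\sum_{e\ni x}w_e>0$, $D=\mathrm{diag}(d_x)$. The distance $d(x,y)$ is the minimal $n$ with a chain $x=z_0\sim\cdots\sim z_n=y$, and $\mathrm{diam}(H)=\max_{x,y}d(x,y)$. $\delta_x$ is the indicator of $x$. $\mathbb{R}^V$ carries the inner product $\langle f,g\rangle=\sum_x f(x)g(x)/d_x$ with norm $\|\cdot\|$. For $e\in E$ let $B_e=\mathrm{Conv}\{\delta_x-\delta_y : x,y\in e\}$. The multivalued hypergraph Laplacian is $L(f)=\{\sum_{e}w_e\mathtt{b}_e(\mathtt{b}_e^\top f) : \mathtt{b}_e\in\operatorname{argmax}_{\mathtt b\in B_e}\mathtt b^\top f\}$ and the normalized Laplacian is $\mathcal{L}f=L(D^{-1}f)$, a maximal monotone operator on $(\mathbb{R}^V,\langle\cdot,\cdot\rangle)$. For $\lambda>0$ the resolvent $J_\lambda=(I+\lambda\mathcal L)^{-1}$ is a single-valued map $\mathbb{R}^V\to\mathbb{R}^V$ (equivalently $J_\lambda f=\operatorname{argmin}_g\{\frac{1}{2\lambda}\|f-g\|^2+Q(D^{-1}g)\}$,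 $Q(g)=\frac12\sum_e w_e\max_{x,y\in e}(g(x)-g(y))^2$). A function $f$ is weighted $1$-Lipschitz if $|f(x)/d_x-f(y)/d_y|\le d(x,y)$ for all $x,y$; $\mathrm{Lip}^1_w(V)$ denotes the set of such functions. $\mathrm{KD}_\lambda(x,y)=\sup\{\langle J_\lambda f,\delta_x-\delta_y\rangle : f\in\mathrm{Lip}^1_w(V)\}$. For $x\ne y$: $\kappa_\lambda(x,y)=1-\mathrm{KD}_\lambda(x,y)/d(x,y)$ and $\overline\kappa(x,y)=\limsup_{\lambda\downarrow0}\kappa_\lambda(x,y)/\lambda$. *)

From HB Require Import structures.
From mathcomp Require Import all_boot all_order all_algebra.
From mathcomp Require Import all_classical all_reals all_analysis.
Set Implicit Arguments. Unset Strict Implicit. Unset Printing Implicit Defensive.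
Import Order.TTheory GRing.Theory Num.Theory.
Import numFieldNormedType.Exports.
Local Open Scope classical_set_scope.
Local Open Scope ring_scope.

Section Hypergraph.
Variables (R : realType) (V : finType).
(* E : the set of hyperedges, w : the weights (only relevant on E) *)
Variables (E : {set {set V}}) (w : {set V} -> R).

Definition hadj (x y : V) : bool := [exists e in E, (x \in e) && (y \in e)].

Fixpoint hchain (n : nat) (x y : V) : bool :=
  if n is n'.+1 then [exists z, hadj x z && hchain n' z y] else x == y.

Definition hconnected : Prop := forall x y : V, exists n, hchain n x y.

(* d(x,y) : minimal length of a chain (0 if no chain exists; never used
   under connectivity) *)
Definition hdist (x y : V) : nat :=
  match boolp.pselect (exists n, hchain n x y) with
  | left h => ex_minn h
  | right _ => 0%N
  end.

Definition hdiam : nat := \max_(x : V) \max_(y : V) hdist x y.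

Definition hdeg (x : V) : R := \sum_(e in E | x \in e) w e.

Definition hdelta (x : V) : V -> R := fun z => (z == x)%:R.

Definition hinner (f g : V -> R) : R := \sum_x f x * g x / hdeg x.

Definition dotp (b f : V -> R) : R := \sum_x b x * f x.

(* b in B_e = Conv{delta_x - delta_y : x, y in e} *)
Definition inBe (e : {set V}) (b : V -> R) : Prop :=
  exists c : V -> V -> R,
    (forall x y, 0 <= c x y) /\
    \sum_(x in e) \sum_(y in e) c x y = 1 /\
    b = (fun z => \sum_(x in e) \sum_(y in e) c x y * (hdelta x z - hdelta y z)).

Definition inLap (f u : V -> R) : Prop :=
  exists b : {set V} -> (V -> R),
    (forall e, e \in E -> inBe e (b e) /\
        (forall b', inBe e b' -> dotp b' f <= dotp (b e) f)) /\
    u = (fun z => \sum_(e in E) w e * dotp (b e) f * b e z).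

Definition inNLap (f u : V -> R) : Prop :=
  inLap (fun x => f x / hdeg x) u.

Definition resolvent (lam : R) (f : V -> R) : V -> R :=
  xget (fun _ => 0) (fun g => exists u, inNLap g u /\ f = (fun z => g z + lam * u z)).

Definition wLip1 (f : V -> R) : Prop :=
  forall x y, `|f x / hdeg x - f y / hdeg y| <= (hdist x y)%:R.

Definition KD (lam : R) (x y : V) : R :=
  sup [set hinner (resolvent lam f) (fun z => hdelta x z - hdelta y z) | f in wLip1].

Definition kappa (lam : R) (x y : V) : R := 1 - KD lam x y / (hdist x y)%:R.

Definition kappa_bar (x y : V) : \bar R :=
  limf_esup (fun lam : R => ((kappa lam x y) / lam)%:E) (0%R)^'+.

End Hypergraph.

(* Let x, y realise the diameter D of H and take the weighted 1-Lipschitz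
   test function f0 = d(., y) D.  The resolvent J_lam f0 differs from f0 by
   lam times an element of \mathcal L(J_lam f0), whose size is controlled by
   the oscillation of D^{-1} J_lam f0 along hyperedges; this gives
       KD_lam(x, y) >= D - 2 lam (1 + 2 lam D),
   hence kappa_lam(x, y) / lam <= (2 + 4 lam D) / D, and letting lam -> 0+
   yields kappa0 <= kappa_bar(x, y) <= 2 / D. *)

From HB Require Import structures.
From mathcomp Require Import all_boot all_order all_algebra.
From mathcomp Require Import all_classical all_reals all_analysis.
From mathcomp Require Import ring lra.
Import Order.TTheory GRing.Theory Num.Theory.
Import numFieldNormedType.Exports.
Set Implicit Arguments. Unset Strict Implicit. Unset Printing Implicit Defensive.
Local Open Scope ring_scope.

Section Distance.
Variables (V : finType) (E : {set {set V}}).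

Lemma hadj_sym a b : hadj E a b = hadj E b a.
Proof.
by apply/existsP/existsP => -[e /andP[eE /andP[ha hb]]]; exists e; rewrite eE ha hb.
Qed.

Lemma hchain_cat n m a b c :
  hchain E n a b -> hchain E m b c -> hchain E (n + m) a c.
Proof.
elim: n a => [|n IH] a /=; first by move=> /eqP ->.
move=> /existsP[z /andP[az zb]] bc; apply/existsP; exists z; rewrite az /=.
exact: IH.
Qed.

Lemma hchain_rev n a b : hchain E n a b -> hchain E n b a.
Proof.
elim: n a => [|n IH] a /=; first by rewrite eq_sym.
move=> /existsP[z /andP[az zb]].
have za : hchain E 1 z a by apply/existsP; exists a; rewrite eqxx andbT hadj_sym.
by have := hchain_cat (IH _ zb) za; rewrite addn1; apply.
Qed.

Hypothesis hconn : hconnected E.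

Lemma hdist_chain a b : hchain E (hdist E a b) a b.
Proof.
rewrite /hdist; case: boolp.pselect => [h|h]; last by case: h; exact: hconn.
by case: ex_minnP.
Qed.

Lemma hdist_min a b n : hchain E n a b -> (hdist E a b <= n)%N.
Proof.
rewrite /hdist; case: boolp.pselect => [h|h] hn; last by case: h; exists n.
by case: ex_minnP => m _; apply.
Qed.

Lemma hdist_sym a b : hdist E a b = hdist E b a.
Proof.
by apply/eqP; rewrite eqn_leq !hdist_min // hchain_rev // hdist_chain.
Qed.

Lemma hdist_tri a b c : (hdist E a c <= hdist E a b + hdist E b c)%N.
Proof. by apply/hdist_min/hchain_cat; apply: hdist_chain. Qed.

Lemma hdist_self a : hdist E a a = 0%N.
Proof. by apply/eqP; rewrite -leqn0; apply: hdist_min => /=. Qed.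

Lemma hdist_edge e a b : e \in E -> a \in e -> b \in e -> (hdist E a b <= 1)%N.
Proof.
move=> eE ae be; apply: hdist_min => /=; apply/existsP; exists b.
by rewrite eqxx andbT; apply/existsP; exists e; rewrite eE ae be.
Qed.

Lemma hdist_lip (R : realType) a b c :
  (hdist E a c)%:R - (hdist E b c)%:R <= (hdist E a b)%:R :> R.
Proof. by have := hdist_tri a b c; rewrite -(ler_nat R) natrD; lra. Qed.

End Distance.

Lemma hdist_diam (V : finType) (E : {set {set V}}) a b :
  (hdist E a b <= hdiam E)%N.
Proof. exact: leq_trans (leq_bigmax b) (leq_bigmax a). Qed.

Lemma hdiam_attained (V : finType) (E : {set {set V}}) :
  (0 < #|V|)%N -> exists a b, hdist E a b = hdiam E.
Proof.
move=> V0; rewrite /hdiam.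
have [a ->] := @bigop.eq_bigmax V (fun a => \max_(y : V) hdist E a y) V0.
by have [b ->] := @bigop.eq_bigmax V (fun y => hdist E a y) V0; exists a, b.
Qed.

Section Laplacian.
Variables (R : realType) (V : finType).
Implicit Types (e : {set V}) (h b : V -> R) (c : V -> V -> R).

Lemma sum_indicator (I : finType) (A : {set I}) (q : I) (F : I -> R) :
  q \in A -> \sum_(x in A) (x == q)%:R * F x = F q.
Proof.
move=> qA; rewrite (bigD1 q) //= eqxx mul1r big1 ?addr0 //.
by move=> x /andP[_ /negbTE ->]; rewrite mul0r.
Qed.

Lemma sum_delta (F : V -> R) a : \sum_z hdelta R a z * F z = F a.
Proof.
rewrite (bigD1 a) //= /hdelta eqxx mul1r big1 ?addr0 // => z /negbTE ->.
by rewrite mul0r.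
Qed.

Lemma dotp_delta h p q : dotp (fun z => hdelta R p z - hdelta R q z) h = h p - h q.
Proof. by rewrite /dotp; under eq_bigr do rewrite mulrBl; rewrite sumrB !sum_delta. Qed.

Definition comb e c : V -> R :=
  fun z => \sum_(x in e) \sum_(y in e) c x y * (hdelta R x z - hdelta R y z).

Lemma dotp_comb e c h :
  dotp (comb e c) h = \sum_(x in e) \sum_(y in e) c x y * (h x - h y).
Proof.
rewrite /dotp /comb; under eq_bigr do rewrite mulr_suml.
rewrite exchange_big; apply: eq_bigr => x _.
under eq_bigr do rewrite mulr_suml.
rewrite exchange_big; apply: eq_bigr => y _.
rewrite -dotp_delta /dotp mulr_sumr; apply: eq_bigr => z _.
by rewrite mulrA.
Qed.

Lemma inBe_pair e p q : p \in e -> q \in e ->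
  inBe e (fun z => hdelta R p z - hdelta R q z).
Proof.
move=> pe qe.
have sum2 (F : V -> V -> R) : \sum_(x in e) \sum_(y in e)
    ((x == p) && (y == q))%:R * F x y = F p q.
  under eq_bigr => x _ do (under eq_bigr => y _ do rewrite -mulnb natrM -mulrA;
    rewrite -mulr_sumr (sum_indicator (fun y => F x y)) //).
  exact: (sum_indicator (fun x => F x q)).
exists (fun x y => ((x == p) && (y == q))%:R); split=> [x y|]; first exact: ler0n.
split; first by have := sum2 (fun _ _ => 1); under eq_bigr do under eq_bigr do rewrite mulr1.
by apply/funext => z; rewrite sum2.
Qed.

Lemma comb_abs e c z : (forall x y, 0 <= c x y) ->
  \sum_(x in e) \sum_(y in e) c x y = 1 -> `|comb e c z| <= (z \in e)%:R.
Proof.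
move=> c0 c1; rewrite /comb; case ze: (z \in e); last first.
  have nz t : t \in e -> (z == t) = false by move=> te; apply: contraFF ze => /eqP ->.
  rewrite big1 ?normr0 // => x xe; rewrite big1 // => y ye.
  by rewrite /hdelta !nz // subrr mulr0.
rewrite -c1; apply: le_trans (ler_norm_sum _ _ _) _; apply: ler_sum => x xe.
apply: le_trans (ler_norm_sum _ _ _) _; apply: ler_sum => y ye.
rewrite normrM (ger0_norm (c0 x y)) ler_piMr // /hdelta.
by case: (z == x); case: (z == y); rewrite ?subrr ?subr0 ?sub0r ?normrN ?normr1 ?normr0.
Qed.

Definition optB e h b := inBe e b /\ (forall b', inBe e b' -> dotp b' h <= dotp b h).

Lemma optB_ge e h b p q : optB e h b -> p \in e -> q \in e -> h p - h q <= dotp b h.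
Proof. by move=> [_ hmax] pe qe; rewrite -dotp_delta; apply/hmax/inBe_pair. Qed.

Lemma optB_ge0 e h b : e != finset.set0 -> optB e h b -> 0 <= dotp b h.
Proof. by move=> /set0Pn[p pe] ob; have := optB_ge ob pe pe; rewrite subrr. Qed.

(* Complementary slackness: an optimal combination only charges pairs
   (x, y) at which h x - h y attains the maximal value b^T h. *)
Lemma optB_slack e h c : optB e h (comb e c) -> (forall x y, 0 <= c x y) ->
  \sum_(x in e) \sum_(y in e) c x y = 1 ->
  forall x y, x \in e -> y \in e -> c x y * (h x - h y) = c x y * dotp (comb e c) h.
Proof.
move=> ob c0 c1; set a := dotp _ h.
have aE : a = \sum_(x in e) \sum_(y in e) c x y * (h x - h y) := dotp_comb e c h.
have gap x y : x \in e -> y \in e -> 0 <= c x y * (a - (h x - h y)).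
  by move=> xe ye; rewrite mulr_ge0 // subr_ge0 (optB_ge ob).
have gap0 : \sum_(x in e) \sum_(y in e) c x y * (a - (h x - h y)) = 0.
  under eq_bigr do under eq_bigr do rewrite mulrBr.
  under eq_bigr do rewrite sumrB -mulr_suml.
  by rewrite sumrB -mulr_suml c1 mul1r -aE subrr.
move=> x y xe ye.
have row : \sum_(y' in e) c x y' * (a - (h x - h y')) = 0.
  by apply: (psumr_eq0P _ gap0) => // x' x'e; apply: sumr_ge0 => y' y'e; exact: gap.
have := psumr_eq0P (fun y' y'e => gap x y' xe y'e) row ye.
by rewrite mulrBr => /eqP; rewrite subr_eq0 => /eqP ->.
Qed.

(* Consequently (b^T h) b(z) is a combination of the products
   (h x - h y)(delta_x z - delta_y z), whose signs are easy to control. *)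
Lemma optB_mul e h c z : optB e h (comb e c) -> (forall x y, 0 <= c x y) ->
  \sum_(x in e) \sum_(y in e) c x y = 1 ->
  dotp (comb e c) h * comb e c z =
  \sum_(x in e) \sum_(y in e) c x y * ((h x - h y) * (hdelta R x z - hdelta R y z)).
Proof.
move=> ob c0 c1; rewrite {2}/comb mulr_sumr; apply: eq_bigr => x xe.
rewrite mulr_sumr; apply: eq_bigr => y ye.
by rewrite [RHS]mulrA (optB_slack ob c0 c1 xe ye); ring.
Qed.

Lemma delta_term_max h z x y : (forall t, h t <= h z) ->
  0 <= (h x - h y) * (hdelta R x z - hdelta R y z).
Proof.
move=> hmax; rewrite /hdelta.
have [<-|_] := eqVneq z x; have [<-|_] := eqVneq z y;
  rewrite /= ?mulr1n ?mulr0n ?subrr ?mulr0 ?subr0 ?mulr1 ?sub0r ?mulrN1 ?opprB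
    ?subr_ge0 ?lexx //; exact: hmax.
Qed.

Lemma delta_term_min h z x y : (forall t, h z <= h t) ->
  (h x - h y) * (hdelta R x z - hdelta R y z) <= 0.
Proof.
move=> hmin; rewrite /hdelta.
have [<-|_] := eqVneq z x; have [<-|_] := eqVneq z y;
  rewrite /= ?mulr1n ?mulr0n ?subrr ?mulr0 ?subr0 ?mulr1 ?sub0r ?mulrN1 ?oppr_le0
    ?subr_le0 ?subr_ge0 ?lexx //; exact: hmin.
Qed.

Variables (E : {set {set V}}) (w : {set V} -> R).
Hypothesis hw : forall e, e \in E -> 0 < w e.

Lemma lap_max h u z : inLap E w h u -> (forall t, h t <= h z) -> 0 <= u z.
Proof.
move=> [b [hb ->]] hmax; apply: sumr_ge0 => e eE.
have [[c [c0 [c1 bE]]] _] := hb e eE; have bE' : b e = comb e c := bE.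
have ob : optB e h (comb e c) by rewrite -bE'; exact: hb.
rewrite -mulrA bE' (optB_mul z ob c0 c1) mulr_ge0 ?(ltW (hw eE)) //.
by apply: sumr_ge0 => x _; apply: sumr_ge0 => y _; rewrite mulr_ge0 ?delta_term_max.
Qed.

Lemma lap_min h u z : inLap E w h u -> (forall t, h z <= h t) -> u z <= 0.
Proof.
move=> [b [hb ->]] hmin; apply: sumr_le0 => e eE.
have [[c [c0 [c1 bE]]] _] := hb e eE; have bE' : b e = comb e c := bE.
have ob : optB e h (comb e c) by rewrite -bE'; exact: hb.
rewrite -mulrA bE' (optB_mul z ob c0 c1) mulr_ge0_le0 ?(ltW (hw eE)) //.
by apply: sumr_le0 => x _; apply: sumr_le0 => y _; rewrite mulr_ge0_le0 ?delta_term_min.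
Qed.

Hypothesis hE : forall e, e \in E -> e != finset.set0.

Lemma lap_ubound h u A : inLap E w h u ->
  (forall e p q, e \in E -> p \in e -> q \in e -> h p - h q <= A) ->
  forall z, `|u z| <= A * hdeg E w z.
Proof.
move=> [b [hb ->]] hA z; rewrite /hdeg big_mkcondr /= mulr_sumr.
apply: le_trans (ler_norm_sum _ _ _) _; apply: ler_sum => e eE.
have a0 := optB_ge0 (hE eE) (hb e eE).
have [[c [c0 [c1 bE]]] _] := hb e eE; have bE' : b e = comb e c := bE.
have aA : dotp (b e) h <= A.
  rewrite bE' dotp_comb -[A]mul1r -c1 mulr_suml; apply: ler_sum => x xe.
  rewrite mulr_suml; apply: ler_sum => y ye.
  by apply: ler_wpM2l; [exact: c0 | exact: hA eE xe ye].
have bz : `|b e z| <= (z \in e)%:R by rewrite bE'; exact: comb_abs.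
rewrite !normrM (ger0_norm a0) (gtr0_norm (hw eE)).
case ze: (z \in e); last first.
  by move: bz; rewrite ze normr_le0 => /eqP ->; rewrite normr0 !mulr0.
rewrite [A * _]mulrC -mulrA ler_wpM2l ?(ltW (hw eE)) //.
by rewrite ze /= in bz; rewrite -[A]mulr1 ler_pM.
Qed.

End Laplacian.

(* A quadratic t D + t^2 G that stays nonpositive for all small t > 0
   (resp. t < 0) has slope D <= 0 (resp. D >= 0): the first-order
   optimality conditions used below. *)
Section FirstOrder.
Variable R : realType.

Lemma slope_nonpos (D G eps : R) : 0 < eps ->
  (forall t, 0 < t -> t < eps -> t * D + t^+2 * G <= 0) -> D <= 0.
Proof.
move=> he H; rewrite leNgt; apply/negP => Dp.
set M := `|G| + 1.
have M0 : 0 < M by rewrite /M ltr_pwDr // normr_ge0.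
set t := Num.min (eps / 2) (D / (2 * M)).
have t0 : 0 < t by rewrite lt_min !divr_gt0 ?mulr_gt0.
have te : t < eps.
  have : t <= eps / 2 by rewrite /t ge_min lexx.
  lra.
have tD : t * (2 * M) <= D.
  by rewrite -ler_pdivlMr ?mulr_gt0 // /t ge_min lexx orbT.
have := H t t0 te.
have Gl : - `|G| <= G by rewrite lerNl -normrN ler_norm.
have tt : 0 < t * t by rewrite mulr_gt0.
rewrite expr2 /M in tD *; nra.
Qed.

Lemma slope_nonneg (D G eps : R) : 0 < eps ->
  (forall t, - eps < t -> t < 0 -> t * D + t^+2 * G <= 0) -> 0 <= D.
Proof.
move=> he H; rewrite -oppr_le0; apply: (slope_nonpos (G := G) he) => t t0 te.
have := H (- t); rewrite sqrrN mulNr mulrN => h; apply: h; lra.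
Qed.

End FirstOrder.

Section RowContinuity.
Variables (R : realType) (n : nat).
Implicit Types (f g : 'rV[R]_n -> R).

Lemma continuous_addf f g : continuous f -> continuous g ->
  continuous (fun v => f v + g v).
Proof. by move=> cf cg x; have := continuousD (cf x) (cg x); exact. Qed.

Lemma continuous_subf f g : continuous f -> continuous g ->
  continuous (fun v => f v - g v).
Proof. by move=> cf cg x; have := continuousB (cf x) (cg x); exact. Qed.

Lemma continuous_mulf f g : continuous f -> continuous g ->
  continuous (fun v => f v * g v).
Proof. by move=> cf cg x; have := continuousM (cf x) (cg x); exact. Qed.

Lemma continuous_sumf (I : Type) (r : seq I) (P : pred I) (F : I -> 'rV[R]_n -> R) :
  (forall i, continuous (F i)) -> continuous (fun v => \sum_(i <- r | P i) F i v).
Proof.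
move=> cF; elim: r => [|i r IH].
  under eq_fun do rewrite big_nil; exact: cst_continuous.
under eq_fun do rewrite big_cons.
by case: (P i); [exact: continuous_addf | exact: IH].
Qed.

End RowContinuity.

(* A dual variable c weighs every
   triple (e, x, y); it determines unnormalised combinations on the edges,
   an element u of the cone generated by L, and the candidate h.  We
   maximise a concave dual function of c over a compact box; the
   first-order conditions at the maximiser say exactly that the normalised
   combinations are optimal for h, i.e. that u belongs to L(h). *)
Section ResolventExistence.
Variables (R : realType) (V : finType) (E : {set {set V}}) (w : {set V} -> R).
Hypothesis hE : forall e, e \in E -> e != finset.set0.
Hypothesis hw : forall e, e \in E -> 0 < w e.
Hypothesis hd : forall x, 0 < hdeg E w x.
Variables (lam : R) (p : V -> R).
Hypothesis hlam : 0 < lam.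

Local Notation d := (hdeg E w).
Local Notation T := ({set V} * V * V)%type.
Implicit Types (c k : T -> R) (e : {set V}) (x y z a b : V).

(* The mass of c on e, the unnormalised combination it puts on e, the
   induced element of the cone generated by L, and the candidate h. *)
Definition mass c e := \sum_(x in e) \sum_(y in e) c (e, x, y).
Definition flow c e := comb e (fun x y => c (e, x, y)).
Definition lapc c z := \sum_(e in E) w e * flow c e z.
Definition primal c z := p z - lam * lapc c z / d z.

Definition dlin c := \sum_(e in E) w e * dotp (flow c e) p.
Definition dquad c := \sum_z (lapc c z)^+2 / d z.
Definition dmass c := \sum_(e in E) w e * (mass c e)^+2.
Definition dual c := dlin c - lam / 2 * dquad c - 1 / 2 * dmass c.

Definition shift c k t : T -> R := fun i => c i + t * k i.
Definition dslope c k := dlin k - lam * (\sum_z lapc c z * lapc k z / d z)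
  - \sum_(e in E) w e * mass c e * mass k e.
Definition dcurv k := lam / 2 * dquad k + 1 / 2 * dmass k.

Lemma mass_shift c k t e : mass (shift c k t) e = mass c e + t * mass k e.
Proof.
rewrite /mass mulr_sumr -big_split; apply: eq_bigr => x _.
by rewrite mulr_sumr -big_split.
Qed.

Lemma flow_shift c k t e z : flow (shift c k t) e z = flow c e z + t * flow k e z.
Proof.
rewrite /flow /comb mulr_sumr -big_split; apply: eq_bigr => x _.
rewrite mulr_sumr -big_split; apply: eq_bigr => y _ /=.
by rewrite /shift mulrDl mulrA.
Qed.

Lemma lapc_shift c k t z : lapc (shift c k t) z = lapc c z + t * lapc k z.
Proof.
rewrite /lapc mulr_sumr -big_split; apply: eq_bigr => e _.
by rewrite flow_shift mulrDr mulrCA.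
Qed.

Lemma dual_shift c k t :
  dual (shift c k t) = dual c + t * dslope c k - t^+2 * dcurv k.
Proof.
have dotp_shift e :
    dotp (flow (shift c k t) e) p = dotp (flow c e) p + t * dotp (flow k e) p.
  rewrite /dotp mulr_sumr -big_split; apply: eq_bigr => z _ /=.
  by rewrite flow_shift; ring.
have lin : dlin (shift c k t) = dlin c + t * dlin k.
  rewrite /dlin mulr_sumr -big_split; apply: eq_bigr => e _.
  by rewrite /= dotp_shift; ring.
have quad : dquad (shift c k t) = dquad c
    + 2 * t * (\sum_z lapc c z * lapc k z / d z) + t^+2 * dquad k.
  rewrite /dquad !mulr_sumr -!big_split; apply: eq_bigr => z _.
  by rewrite /= lapc_shift; ring.
have mss : dmass (shift c k t) = dmass c
    + 2 * t * (\sum_(e in E) w e * mass c e * mass k e) + t^+2 * dmass k.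
  rewrite /dmass !mulr_sumr -!big_split; apply: eq_bigr => e _.
  by rewrite /= mass_shift; ring.
by rewrite /dual lin quad mss /dslope /dcurv; field.
Qed.

Lemma dual0 : dual (fun _ => 0) = 0.
Proof.
have flow0 e z : flow (fun _ => 0) e z = 0.
  by rewrite /flow /comb big1 // => x _; rewrite big1 // => y _; rewrite mul0r.
have lapc0 z : lapc (fun _ => 0) z = 0.
  by rewrite /lapc big1 // => e _; rewrite flow0 mulr0.
rewrite /dual /dlin /dquad /dmass big1; last first.
  by move=> e _; rewrite /dotp big1 ?mulr0 // => z _; rewrite flow0 mul0r.
rewrite big1; last by move=> z _; rewrite lapc0 expr2 !mul0r.
have mass0 e : mass (fun _ => 0) e = 0 by rewrite /mass big1 // => x _; rewrite big1.
rewrite big1; last by move=> e _; rewrite mass0 expr2 mul0r mulr0.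
by rewrite !mulr0 !subr0.
Qed.

Section PairDirection.
Variables (e0 : {set V}) (a b : V).
Hypotheses (e0E : e0 \in E) (ae : a \in e0) (be : b \in e0).

Definition pairdir : T -> R := fun i => (i == (e0, a, b))%:R.

Lemma sum_pairdir e (F : V -> V -> R) :
  \sum_(x in e) \sum_(y in e) pairdir (e, x, y) * F x y = (e == e0)%:R * F a b.
Proof.
have [->|ne] := eqVneq e e0; rewrite /= ?mulr1n ?mulr0n; last first.
  rewrite mul0r big1 // => x _; rewrite big1 // => y _.
  by rewrite /pairdir !xpair_eqE (negbTE ne) mul0r.
have -> : F a b = \sum_(x in e0) (x == a)%:R * \sum_(y in e0) (y == b)%:R * F x y.
  by rewrite sum_indicator // sum_indicator.
rewrite mul1r; apply: eq_bigr => x _; rewrite mulr_sumr; apply: eq_bigr => y _.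
by rewrite /pairdir !xpair_eqE eqxx /= mulrA -natrM mulnb.
Qed.

Lemma mass_pairdir e : mass pairdir e = (e == e0)%:R.
Proof.
have := sum_pairdir e (fun _ _ => 1); rewrite mulr1 => <-.
by apply: eq_bigr => x _; apply: eq_bigr => y _; rewrite mulr1.
Qed.

Lemma flow_pairdir e z : flow pairdir e z = (e == e0)%:R * (hdelta R a z - hdelta R b z).
Proof. exact: (sum_pairdir e (fun x y => hdelta R x z - hdelta R y z)). Qed.

Lemma lapc_pairdir z : lapc pairdir z = w e0 * (hdelta R a z - hdelta R b z).
Proof.
rewrite /lapc -(sum_indicator (fun e => w e * (hdelta R a z - hdelta R b z)) e0E).
by apply: eq_bigr => e _; rewrite flow_pairdir mulrCA.
Qed.

Lemma dslope_pairdir c : dslope c pairdir = w e0 * (primal c a - primal c b - mass c e0).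
Proof.
have lin : dlin pairdir = w e0 * (p a - p b).
  rewrite /dlin -(sum_indicator (fun e => w e * (p a - p b)) e0E).
  apply: eq_bigr => e _.
  by rewrite /flow dotp_comb (sum_pairdir e (fun x y => p x - p y)) mulrCA.
have cross : \sum_z lapc c z * lapc pairdir z / d z
    = w e0 * (lapc c a / d a - lapc c b / d b).
  rewrite -(sum_delta (fun z => lapc c z / d z) a).
  rewrite -(sum_delta (fun z => lapc c z / d z) b) -sumrB mulr_sumr.
  by apply: eq_bigr => z _; rewrite lapc_pairdir; ring.
have mss : \sum_(e in E) w e * mass c e * mass pairdir e = w e0 * mass c e0.
  rewrite -(sum_indicator (fun e => w e * mass c e) e0E).
  by apply: eq_bigr => e _; rewrite mass_pairdir mulrC.
by rewrite /dslope lin cross mss /primal; ring.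
Qed.

End PairDirection.

(* A priori bounds: a nonnegative c with dual c >= 0 has bounded masses, so
   the maximisation can be restricted to a compact box whose upper faces
   are inactive at a maximiser. *)
Definition pnorm := \sum_z `|p z|.
Definition wtot := \sum_(e in E) w e.
Definition mass_bound e := 4 * pnorm + 4 * pnorm^+2 * wtot / w e + 2.
Definition box_bound (i : T) : R :=
  if (i.1.1 \in E) && (i.1.2 \in i.1.1) && (i.2 \in i.1.1) then mass_bound i.1.1 else 0.
Definition feasible c := forall i, 0 <= c i <= box_bound i.

Lemma pnorm_ge0 : 0 <= pnorm.
Proof. by apply: sumr_ge0 => z _; exact: normr_ge0. Qed.

Lemma wtot_ge0 : 0 <= wtot.
Proof. by apply: sumr_ge0 => e eE; exact: ltW (hw eE). Qed.

Lemma abs_le_pnorm z : `|p z| <= pnorm.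
Proof. by rewrite /pnorm (bigD1 z) //= lerDl; apply: sumr_ge0 => y _; exact: normr_ge0. Qed.

Lemma box_bound_ge0 i : 0 <= box_bound i.
Proof.
rewrite /box_bound; case: ifP => // /andP[/andP[eE _] _].
have P0 := pnorm_ge0; have W0 := wtot_ge0; have w0 := hw eE.
rewrite /mass_bound; apply: addr_ge0; last by [].
apply: addr_ge0; first by apply: mulr_ge0.
apply: divr_ge0; last exact: ltW.
by apply: mulr_ge0 => //; apply: mulr_ge0 => //; apply: mulr_ge0.
Qed.

Definition mass_gain s := 2 * pnorm * s - s^+2 / 2.

Lemma dual_le_gain c : (forall i, 0 <= c i) ->
  dual c <= \sum_(e in E) w e * mass_gain (mass c e).
Proof.
move=> c0.
have Q0 : 0 <= lam / 2 * dquad c.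
  apply: mulr_ge0; first by apply: divr_ge0 => //; exact: ltW.
  by apply: sumr_ge0 => z _; apply: divr_ge0; [exact: sqr_ge0 | exact: ltW].
have L : dlin c <= \sum_(e in E) w e * (2 * pnorm * mass c e).
  apply: ler_sum => e eE; apply: ler_wpM2l; first exact: ltW (hw eE).
  rewrite /flow dotp_comb /mass mulr_sumr; apply: ler_sum => x _.
  rewrite mulr_sumr; apply: ler_sum => y _; rewrite mulrC; apply: ler_wpM2r; first exact: c0.
  have := abs_le_pnorm x; have := abs_le_pnorm y.
  have := ler_norm (p x); have := ler_norm (- p y); rewrite normrN; lra.
have -> : \sum_(e in E) w e * mass_gain (mass c e) =
    \sum_(e in E) w e * (2 * pnorm * mass c e) - 1 / 2 * dmass c.
  rewrite /dmass [X in _ - X]mulr_sumr -sumrB; apply: eq_bigr => e _.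
  by rewrite /mass_gain; field.
rewrite /dual; lra.
Qed.

Lemma mass_le_bound c e0 : (forall i, 0 <= c i) -> 0 <= dual c -> e0 \in E ->
  mass c e0 <= mass_bound e0 - 1.
Proof.
move=> c0 G0 e0E.
have P0 := pnorm_ge0; have w0 := hw e0E.
have gain_le s : mass_gain s <= 2 * pnorm^+2.
  by rewrite /mass_gain; have := sqr_ge0 (s - 2 * pnorm); rewrite !expr2; lra.
have others : \sum_(e in E) w e * mass_gain (mass c e) <=
    w e0 * mass_gain (mass c e0) + 2 * pnorm^+2 * wtot.
  rewrite (bigD1 e0) //= lerD2l /wtot [X in _ <= _ * X](bigD1 e0) //= mulrDr.
  apply: (@le_trans _ _ (2 * pnorm^+2 * (\sum_(i in E | i != e0) w i))).
    rewrite mulr_sumr; apply: ler_sum => e /andP[eE _]; rewrite mulrC.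
    by apply: ler_wpM2r => //; exact: ltW (hw eE).
  rewrite lerDr; apply: mulr_ge0; last exact: ltW.
  by apply: mulr_ge0 => //; apply: sqr_ge0.
set K := 2 * pnorm^+2 * wtot / w e0.
have K0 : 0 <= K.
  apply: divr_ge0; last exact: ltW.
  by apply: mulr_ge0; [apply: mulr_ge0 => //; exact: sqr_ge0 | exact: wtot_ge0].
have gainK : - mass_gain (mass c e0) <= K.
  rewrite /K ler_pdivlMr // mulNr mulrC.
  by move: (le_trans G0 (le_trans (dual_le_gain c0) others)); lra.
have -> : mass_bound e0 - 1 = 4 * pnorm + 2 * K + 1.
  by rewrite /mass_bound /K; field; rewrite gt_eqF.
rewrite leNgt; apply/negP => hS.
by move: gainK; rewrite /mass_gain expr2; nra.
Qed.

Local Notation N := #|{: T}|.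
Definition of_row (v : 'rV[R]_N) : T -> R := fun i => v ord0 (enum_rank i).
Definition to_row c : 'rV[R]_N := \row_j c (enum_val j).

Lemma to_rowK c : of_row (to_row c) = c.
Proof. by apply/funext => i; rewrite /of_row /to_row mxE enum_rankK. Qed.

Lemma continuous_coord i : continuous (fun v : 'rV[R]_N => of_row v i).
Proof. exact: coord_continuous. Qed.

Lemma continuous_mass e : continuous (fun v => mass (of_row v) e).
Proof. by apply: continuous_sumf => x; apply: continuous_sumf => y; exact: continuous_coord. Qed.

Lemma continuous_flow e z : continuous (fun v => flow (of_row v) e z).
Proof.
apply: continuous_sumf => x; apply: continuous_sumf => y.
by apply: continuous_mulf; [exact: continuous_coord | exact: cst_continuous].
Qed.

Lemma continuous_lapc z : continuous (fun v => lapc (of_row v) z).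
Proof.
apply: continuous_sumf => e.
by apply: continuous_mulf; [exact: cst_continuous | exact: continuous_flow].
Qed.

Lemma continuous_dual : continuous (fun v => dual (of_row v)).
Proof.
have sq (f : 'rV[R]_N -> R) : continuous f -> continuous (fun v => f v ^+ 2).
  move=> cf; have -> : (fun v => f v ^+ 2) = (fun v => f v * f v).
    by apply/funext => v; rewrite expr2.
  exact: continuous_mulf.
apply: continuous_subf; first apply: continuous_subf.
- apply: continuous_sumf => e; apply: continuous_mulf; first exact: cst_continuous.
  apply: continuous_sumf => z.
  by apply: continuous_mulf; [exact: continuous_flow | exact: cst_continuous].
- apply: continuous_mulf; first exact: cst_continuous.
  apply: continuous_sumf => z; apply: continuous_mulf; last exact: cst_continuous.
  exact/sq/continuous_lapc.
- apply: continuous_mulf; first exact: cst_continuous.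
  apply: continuous_sumf => e; apply: continuous_mulf; first exact: cst_continuous.
  exact/sq/continuous_mass.
Qed.

Local Open Scope classical_set_scope.
Definition box := [set v : 'rV[R]_N | forall j, `[0, box_bound (enum_val j)] (v ord0 j)].

Lemma box_feasible v : box v <-> feasible (of_row v).
Proof.
split => [hv i | hf j].
  by have := hv (enum_rank i); rewrite /= in_itv /= enum_rankK.
by have := hf (enum_val j); rewrite /= in_itv /of_row /= enum_valK.
Qed.

Lemma dual_has_max : exists c, feasible c /\ forall c', feasible c' -> dual c' <= dual c.
Proof.
have box0 : box !=set0.
  exists (to_row (fun _ => 0)); apply/box_feasible; rewrite to_rowK => i.
  by rewrite lexx box_bound_ge0.
have cbox : compact box.
  apply: (@rV_compact _ _ (fun j => `[0, box_bound (enum_val j)])) => j.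
  exact: segment_compact.
have cdual : {within box, continuous (fun v => dual (of_row v))}.
  exact/continuous_subspaceT/continuous_dual.
have [v vbox vmax] := EVT_max_rV box0 cbox cdual.
exists (of_row v); split; first by apply/box_feasible; rewrite inE in vbox.
move=> c' fc'; rewrite -(to_rowK c'); apply: vmax; rewrite inE; apply/box_feasible.
by rewrite to_rowK.
Qed.

Section Maximiser.
Variable c : T -> R.
Hypothesis c_feas : feasible c.
Hypothesis c_max : forall c', feasible c' -> dual c' <= dual c.
Local Notation h := (primal c).

Lemma maximiser_ge0 i : 0 <= c i.
Proof. by have /andP[] := c_feas i. Qed.

Lemma mass_ge0 e : 0 <= mass c e.
Proof. by apply: sumr_ge0 => x _; apply: sumr_ge0 => y _; exact: maximiser_ge0. Qed.

Lemma maximiser_mass e : e \in E -> mass c e <= mass_bound e - 1.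
Proof.
apply: mass_le_bound maximiser_ge0 _; rewrite -dual0; apply: c_max => i.
by rewrite lexx box_bound_ge0.
Qed.

Lemma coord_le_mass e a b : a \in e -> b \in e -> c (e, a, b) <= mass c e.
Proof.
move=> ae be; rewrite /mass (bigD1 a) //= (bigD1 b) //= -addrA lerDl.
apply: addr_ge0; first by apply: sumr_ge0 => y _; exact: maximiser_ge0.
by apply: sumr_ge0 => x _; apply: sumr_ge0 => y _; exact: maximiser_ge0.
Qed.

Lemma maximiser_pair e0 a b t : e0 \in E -> a \in e0 -> b \in e0 ->
  0 <= c (e0, a, b) + t <= mass_bound e0 ->
  t * (w e0 * (h a - h b - mass c e0)) + t^+2 * (- dcurv (pairdir e0 a b)) <= 0.
Proof.
move=> e0E ae be ht.
have feas : feasible (shift c (pairdir e0 a b) t).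
  move=> i; rewrite /shift /pairdir; have [->|_] := eqVneq i (e0, a, b).
    by rewrite /= mulr1n mulr1 /box_bound /= e0E ae be.
  by rewrite /= mulr0n mulr0 addr0; exact: c_feas.
by have := c_max feas; rewrite dual_shift (dslope_pairdir e0E ae be); lra.
Qed.

Lemma maximiser_osc e0 a b : e0 \in E -> a \in e0 -> b \in e0 ->
  h a - h b <= mass c e0.
Proof.
move=> e0E ae be.
have := @slope_nonpos _ (w e0 * (h a - h b - mass c e0)) (- dcurv (pairdir e0 a b)) 1 ltr01.
rewrite pmulr_rle0 ?hw // subr_le0; apply=> t t0 t1; apply: maximiser_pair => //.
have := coord_le_mass ae be; have := maximiser_mass e0E.
have := maximiser_ge0 (e0, a, b); move=> *; apply/andP; split; lra.
Qed.

Lemma maximiser_slack e0 a b : e0 \in E -> a \in e0 -> b \in e0 ->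
  c (e0, a, b) * (h a - h b) = c (e0, a, b) * mass c e0.
Proof.
move=> e0E ae be; have [->|cne] := eqVneq (c (e0, a, b)) 0; first by rewrite !mul0r.
have cpos : 0 < c (e0, a, b) by rewrite lt_def cne maximiser_ge0.
congr (_ * _); apply/eqP; rewrite eq_le maximiser_osc //=.
have := @slope_nonneg _ (w e0 * (h a - h b - mass c e0)) (- dcurv (pairdir e0 a b)) _ cpos.
rewrite pmulr_rge0 ?hw // subr_ge0; apply=> t t0 t1; apply: maximiser_pair => //.
have := coord_le_mass ae be; have := maximiser_mass e0E.
move=> *; apply/andP; split; lra.
Qed.

Lemma dotp_le_mass e (b' : V -> R) : e \in E -> inBe e b' -> dotp b' h <= mass c e.
Proof.
move=> eE [c' [c0' [c1' ->]]]; rewrite dotp_comb -[mass c e]mul1r -c1' mulr_suml.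
apply: ler_sum => x xe; rewrite mulr_suml; apply: ler_sum => y ye.
by apply: ler_wpM2l; [exact: c0' | exact: maximiser_osc].
Qed.

Definition normalized e : V -> R :=
  if 0 < mass c e then (fun z => flow c e z / mass c e) else (fun _ => 0).

Lemma normalized_scale e z : mass c e * normalized e z = flow c e z.
Proof.
rewrite /normalized; case: ifP => mpos; first by rewrite mulrC divfK // gt_eqF.
have m0 : mass c e = 0 by apply/eqP; rewrite eq_le leNgt mpos mass_ge0.
have cx := psumr_eq0P (fun x _ => sumr_ge0 _ (fun y _ => maximiser_ge0 (e, x, y))) m0.
rewrite mulr0 /flow /comb big1 // => x xe; rewrite big1 // => y ye.
by rewrite (psumr_eq0P (fun y _ => maximiser_ge0 (e, x, y)) (cx x xe) ye) mul0r.
Qed.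

Lemma normalized_optimal e : e \in E ->
  optB e h (normalized e) /\ dotp (normalized e) h = mass c e.
Proof.
move=> eE; suff dE : inBe e (normalized e) /\ dotp (normalized e) h = mass c e.
  by split; [split => [|b' hb']; [exact: dE.1 | rewrite dE.2 dotp_le_mass] | exact: dE.2].
rewrite /normalized; case: ifP => mpos; last first.
  have m0 : mass c e = 0 by apply/eqP; rewrite eq_le leNgt mpos mass_ge0.
  have /set0Pn[a ae] := hE eE.
  have := inBe_pair R ae ae; rewrite (_ : (fun z => _ - _) = fun _ => 0); last first.
    by apply/funext => z; rewrite subrr.
  by move=> ib; rewrite m0 /dotp big1 // => z _; rewrite mul0r.
pose c' x y := c (e, x, y) / mass c e.
have c0' x y : 0 <= c' x y by apply: divr_ge0; [exact: maximiser_ge0 | exact: ltW].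
have c1' : \sum_(x in e) \sum_(y in e) c' x y = 1.
  by under eq_bigr do rewrite -mulr_suml; rewrite -mulr_suml divff // gt_eqF.
have -> : (fun z => flow c e z / mass c e) = comb e c'.
  apply/funext => z; rewrite /flow /comb mulr_suml; apply: eq_bigr => x _.
  by rewrite mulr_suml; apply: eq_bigr => y _; rewrite /c' mulrAC.
split; first by exists c'.
rewrite dotp_comb -[RHS]mul1r -c1' mulr_suml; apply: eq_bigr => x xe.
rewrite mulr_suml; apply: eq_bigr => y ye.
by rewrite /c' mulrAC maximiser_slack // mulrAC.
Qed.

Lemma maximiser_solution :
  inLap E w h (lapc c) /\ forall z, p z = h z + lam * lapc c z / d z.
Proof.
split; last by move=> z; rewrite /primal subrK.
exists normalized; split; first by move=> e eE; exact: (normalized_optimal eE).1.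
apply/funext => z; rewrite /lapc; apply: eq_bigr => e eE.
by rewrite (normalized_optimal eE).2 -mulrA normalized_scale.
Qed.

End Maximiser.

Theorem resolvent_solution :
  exists h u, inLap E w h u /\ forall z, p z = h z + lam * u z / d z.
Proof.
have [c [c_feas c_max]] := dual_has_max.
by exists (primal c), (lapc c); exact: maximiser_solution c_feas c_max.
Qed.

End ResolventExistence.

Lemma exists_argmax (T : finType) (R : realType) (z0 : T) (h : T -> R) :
  exists zM, forall z, h z <= h zM.
Proof. by case: (@arg_maxP _ R T z0 xpredT h isT) => zM _ H; exists zM => z; exact: H. Qed.

Lemma exists_argmin (T : finType) (R : realType) (z0 : T) (h : T -> R) :
  exists zm, forall z, h zm <= h z.
Proof.
have [zm H] := exists_argmax z0 (fun z => - h z); exists zm => z.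
by have := H z; rewrite lerN2.
Qed.

Section ResolventBounds.
Variables (R : realType) (V : finType) (E : {set {set V}}) (w : {set V} -> R).
Hypothesis hE : forall e, e \in E -> e != finset.set0.
Hypothesis hw : forall e, e \in E -> 0 < w e.
Hypothesis hd : forall x, 0 < hdeg E w x.
Local Notation d := (hdeg E w).

Lemma resolvent_spec lam f : 0 < lam ->
  exists u, inNLap E w (resolvent E w lam f) u /\
    f = (fun z => resolvent E w lam f z + lam * u z).
Proof.
move=> hlam.
pose P g := exists u, inNLap E w g u /\ f = (fun z => g z + lam * u z).
suff [g Pg] : exists g, P g by exact: (@xgetPex _ (fun _ : V => 0 : R) P (ex_intro _ g Pg)).
have [h [u [hu hp]]] := resolvent_solution hE hw hd (fun z => f z / d z) hlam.
exists (fun z => h z * d z), u; split.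
  by rewrite /inNLap (_ : (fun x => _ / _) = h) //; apply/funext => x; rewrite mulfK ?lt0r_neq0.
apply/funext => z; have := hp z => /(congr1 (fun t => t * d z)).
by rewrite divfK ?lt0r_neq0 // => ->; rewrite mulrDl divfK ?lt0r_neq0.
Qed.

Lemma hinner_delta g x y :
  hinner E w g (fun z => hdelta R x z - hdelta R y z) = g x / d x - g y / d y.
Proof.
rewrite /hinner -(sum_delta (fun z => g z / d z) x) -(sum_delta (fun z => g z / d z) y).
by rewrite -sumrB; apply: eq_bigr => z _; ring.
Qed.

Lemma resolvent_max_principle lam f (z0 : V) : 0 < lam ->
  exists zM zm, forall z,
    f zm / d zm <= resolvent E w lam f z / d z <= f zM / d zM.
Proof.
move=> hlam; set h := fun z => resolvent E w lam f z / d z.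
have [u [hu fE]] := resolvent_spec f hlam.
have [zM HM] := exists_argmax z0 h; have [zm Hm] := exists_argmin z0 h.
have fz z : f z / d z = h z + lam * u z / d z by rewrite {1}fE /h mulrDl.
have dinv z : 0 <= (d z)^-1 by rewrite invr_ge0 ltW.
have ulo : lam * u zm / d zm <= 0.
  exact: mulr_le0_ge0 (mulr_ge0_le0 (ltW hlam) (lap_min hw hu Hm)) (dinv zm).
have uhi : 0 <= lam * u zM / d zM.
  exact: mulr_ge0 (mulr_ge0 (ltW hlam) (lap_max hw hu HM)) (dinv zM).
exists zM, zm => z; rewrite -/(h z) !fz; have := HM z; have := Hm z.
by move=> *; apply/andP; split; lra.
Qed.

Lemma resolvent_gap_le_diam lam x y f : 0 < lam -> wLip1 E w f ->
  hinner E w (resolvent E w lam f) (fun z => hdelta R x z - hdelta R y z) <= (hdiam E)%:R.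
Proof.
move=> hlam hf; rewrite hinner_delta.
have [zM [zm H]] := resolvent_max_principle f x hlam.
have := H x; have := H y; have := hf zM zm; have := hdist_diam E zM zm.
rewrite -(ler_nat R) => hD hl /andP[hy _] /andP[_ hx].
by have := ler_norm (f zM / d zM - f zm / d zm); lra.
Qed.

Lemma lap_scaled_bound lam u A : 0 < lam -> (forall z, `|u z| <= A * d z) ->
  forall z, `|lam * u z / d z| <= lam * A.
Proof.
move=> hlam hA z; rewrite -mulrA normrM (gtr0_norm hlam) ler_pM2l // normrM normfV.
by rewrite (gtr0_norm (hd z)) ler_pdivrMr //; exact: hA.
Qed.

Hypothesis hconn : hconnected E.

Lemma wLip1_dist y : wLip1 E w (fun z => (hdist E z y)%:R * d z).
Proof.
move=> a b; rewrite !mulfK ?lt0r_neq0 // ler_norml.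
have := @hdist_lip _ _ hconn R a b y; have := @hdist_lip _ _ hconn R b a y.
by rewrite (hdist_sym hconn b a); lra.
Qed.

(* Lower bound on KD at a diametral pair, obtained from the test function
   f0 = d(., y) D: the resolvent moves D^{-1} f0 by at most lam times the
   edge oscillation, which is itself at most 1 + 2 lam diam(H). *)
Lemma KD_lower lam x y : 0 < lam -> hdist E x y = hdiam E ->
  (hdiam E)%:R - 2 * lam * (1 + 2 * lam * (hdiam E)%:R) <= KD E w lam x y.
Proof.
move=> hlam hxy; set D0 : R := (hdiam E)%:R.
pose f0 z := (hdist E z y)%:R * d z.
have f0E z : f0 z / d z = (hdist E z y)%:R by rewrite /f0 mulfK ?lt0r_neq0.
have hf0 : wLip1 E w f0 := wLip1_dist y.
have [u [hu fE]] := resolvent_spec f0 hlam.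
have [zM [zm hrange]] := resolvent_max_principle f0 x hlam.
set g := resolvent E w lam f0 in hu fE hrange *.
pose h z := g z / d z.
have hu' : inLap E w h u := hu.
have rel z : (hdist E z y)%:R = h z + lam * u z / d z by rewrite -f0E {1}fE /h mulrDl.
have h_le z : h z <= D0.
  have /andP[_ +] := hrange z; rewrite f0E => /le_trans; apply.
  by rewrite ler_nat; exact: hdist_diam.
have h_ge z : 0 <= h z.
  by have /andP[+ _] := hrange z; rewrite f0E; apply: le_trans.
have osc1 z : `|lam * u z / d z| <= lam * D0.
  apply: lap_scaled_bound hlam _ z => t; apply: (lap_ubound hw hE hu') => e p q _ _ _.
  by have := h_le p; have := h_ge q; lra.
set A := 1 + 2 * lam * D0.
have osc2 z : `|lam * u z / d z| <= lam * A.
  apply: lap_scaled_bound hlam _ z => t; apply: (lap_ubound hw hE hu') => e p q eE pe qe.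
  have := hdist_edge eE pe qe; rewrite -(ler_nat R) mulr1n => he.
  have := @hdist_lip _ _ hconn R p q y; rewrite (rel p) (rel q).
  have := osc1 p; have := osc1 q; have := ler_norm (- (lam * u p / d p)).
  by have := ler_norm (lam * u q / d q); rewrite normrN /A; lra.
have hub : has_ubound [set hinner E w (resolvent E w lam f) (fun z => hdelta R x z - hdelta R y z)
    | f in wLip1 E w]%classic.
  by exists D0 => _ [f hf <-]; exact: resolvent_gap_le_diam.
have := ub_le_sup hub; rewrite /ubound /= => Hsup.
apply: le_trans (Hsup _ _); last by exists f0.
rewrite hinner_delta -/g.
have := rel x; have := rel y; rewrite hxy hdist_self mulr0n /h => ry rx.
have := osc2 x; have := osc2 y; have := ler_norm (lam * u x / d x).
have := ler_norm (- (lam * u y / d y)); rewrite normrN -/D0 in rx *; lra.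
Qed.

Lemma kappa_ratio_le lam delta x y : 0 < lam -> lam < delta ->
  hdist E x y = hdiam E -> (0 < hdiam E)%N ->
  kappa E w lam x y / lam <= (2 + 4 * delta * (hdiam E)%:R) / (hdiam E)%:R.
Proof.
move=> hl hld hxy D0; have := KD_lower hl hxy; set D : R := (hdiam E)%:R => HKD.
have Dp : 0 < D by rewrite ltr0n.
rewrite /kappa hxy -/D ler_pdivrMr // -(ler_pM2r Dp).
have -> : (1 - KD E w lam x y / D) * D = D - KD E w lam x y.
  by field; exact: lt0r_neq0.
have -> : (2 + 4 * delta * D) / D * lam * D = (2 + 4 * delta * D) * lam.
  by field; exact: lt0r_neq0.
have : lam * lam * D <= lam * delta * D by rewrite ler_pM2r // ler_pM2l // ltW.
nra.
Qed.

End ResolventBounds.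

Section LimSup.
Local Open Scope classical_set_scope.

Lemma kappa_bar_le (R : realType) (V : finType) (E : {set {set V}}) (w : {set V} -> R)
    (x y : V) (M delta : R) : 0 < delta ->
  (forall lam, 0 < lam -> lam < delta -> kappa E w lam x y / lam <= M) ->
  (kappa_bar E w x y <= M%:E)%E.
Proof.
move=> hdel Hk.
have near0 : \forall t \near (0:R)^'+, 0 < t < delta.
  near=> t; apply/andP; split; near: t; [exact: nbhs_right_gt | exact: nbhs_right_lt].
rewrite /kappa_bar /limf_esup.
apply: (@le_trans _ _ (ereal_sup ((fun lam => (kappa E w lam x y / lam)%:E) @`
  [set t | 0 < t < delta]))).
  by apply: ereal_inf_lbound; exists [set t | 0 < t < delta].
by apply: ge_ereal_sup => _ [t /andP[t0 t1] <-]; rewrite lee_fin; exact: Hk.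
Unshelve. all: by end_near.
Qed.

End LimSup.

Unset Implicit Arguments.

Theorem mainTheorem16 (R : realType) (V : finType)
  (E : {set {set V}}) (w : {set V} -> R)
  (hE : forall e, e \in E -> e != finset.set0)
  (hw : forall e, e \in E -> 0 < w e)
  (hconn : hconnected E)
  (hdeg_pos : forall x : V, 0 < hdeg E w x)
  (hV : (2 <= #|V|)%N)
  (kappa0 : R) (hk0 : 0 < kappa0)
  (hcurv : forall x y : V, x != y -> (kappa0%:E <= kappa_bar E w x y)%E) :
  (hdiam E)%:R <= 2 / kappa0.
Proof.
have [x [y hxy]] := hdiam_attained E (ltnW hV).
have [->|D0] := posnP (hdiam E); first by rewrite divr_ge0 // ltW.
have xy : x != y by apply: contraTneq D0 => exy; rewrite -hxy exy hdist_self.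
set D : R := (hdiam E)%:R; have Dp : 0 < D by rewrite ltr0n.
rewrite ler_pdivlMr //; apply/ler_addgt0Pr => eps heps.
have hdel : 0 < eps / (4 * D) by rewrite divr_gt0 ?mulr_gt0.
have ratio lam : 0 < lam -> lam < eps / (4 * D) ->
    kappa E w lam x y / lam <= (2 + 4 * (eps / (4 * D)) * D) / D.
  by move=> hl hld; apply: (kappa_ratio_le hE hw hdeg_pos hconn hl hld hxy D0).
have := le_trans (hcurv x y xy) (kappa_bar_le hdel ratio).
rewrite lee_fin ler_pdivlMr // (_ : 4 * (eps / (4 * D)) * D = eps); first lra.
by field; exact: lt0r_neq0.
Qed.
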